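(* Let $S$ be a semigroup or monoid. Then any two loop problems of $S$, taken with respect to finite choices of generators (semigroup choices, or, when $S$ is a monoid, semigroup or monoid choices), are rationally equivalent.
   Context: Maps are written on the right. $X^*$, $X^+$: free monoid and free semigroup on $X$. Let $\overline{X} = \{\overline{x} : x \in X\}$ be new symbols, $\hat{X} = X \cup \overline{X}$. For a monoid $M$ and surjective monoid morphism $\sigma : X^* \to M$, the loop automaton has vertex set $M$, for each $a \in M$, $x \in X$ an edge $a \to a(x\sigma)$ labelled $x$ and an edge $a(x\sigma) \to a$ labelled $\overline{x}$; the loop problem $L_\sigma(M) \subseteq \hat{X}^*$ is the set of labels of paths from the identity to the identity. For a semigroup $S$ (possibly a monoid) and surjective morphism $\sigma : X^+ \to S$, $L_\sigma(S)$ is the loop problem of $S^1$ ($S$ with a new identity adjoined, even if one exists) with respect to the unique extension $X^* \to S^1$. A rational transduction from a finite alphabet $A$ to a finite alphabet $B$ is a relation $\rho \subseteq A^* \times B^*$ accepted by a finite transducer: a finite directed graph with edges labelled in $A^* \times B^*$, an initial vertex and terminal vertices, accepting the componentwise-concatenated labels of initial-to-terminal paths. The image of $L \subseteq A^*$ is $L\rho = \{v : (u,v) \in \rho \text{ for some } u \in L\}$. Two languages are rationally equivalent if each is the image of the other under some rational transduction. *)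

From mathcomp Require Import all_boot.
Set Implicit Arguments. Unset Strict Implicit. Unset Printing Implicit Defensive.

(* Words over hat X = X ∪ X̄ are [seq (X + X)]: [inl x] is the letter x,
   [inr x] is the letter x̄. *)

Section Loop.
Variables (M : Type) (mul : M -> M -> M) (X : Type) (g : X -> M).

(* [lpath m w m']: w labels a path from m to m' in the loop automaton of
   (M, g): an edge a -> a*(g x) labelled x and an edge a*(g x) -> a
   labelled x̄. *)
Fixpoint lpath (m : M) (w : seq (X + X)) (m' : M) : Prop :=
  match w with
  | [::] => m = m'
  | inl x :: w' => lpath (mul m (g x)) w' m'
  | inr x :: w' => exists m0, mul m0 (g x) = m /\ lpath m0 w' m'
  end.

Definition loop_language (one : M) (w : seq (X + X)) : Prop := lpath one w one.
End Loop.

Definition adj1_mul (S : Type) (op : S -> S -> S) (a b : option S) : option S :=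
  match a, b with
  | None, _ => b
  | _, None => a
  | Some x, Some y => Some (op x y)
  end.

(* Semigroup choice: f : X -> S such that the induced X^+ -> S is surjective. *)
Definition sg_generates (S : Type) (op : S -> S -> S) (X : Type) (f : X -> S) : Prop :=
  forall s : S, exists (x : X) (w : seq X),
    s = foldl (fun acc y => op acc (f y)) (f x) w.

(* Monoid choice: f : X -> S such that the induced X^* -> S is surjective
   (empty word maps to the identity e). *)
Definition mon_generates (S : Type) (op : S -> S -> S) (e : S) (X : Type) (f : X -> S) : Prop :=
  forall s : S, exists w : seq X, s = foldl (fun acc y => op acc (f y)) e w.

Definition loop_problem_sg (S : Type) (op : S -> S -> S) (X : Type) (f : X -> S)
  : seq (X + X) -> Prop :=
  loop_language (adj1_mul op) (fun x => Some (f x)) None.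

Definition loop_problem_mon (S : Type) (op : S -> S -> S) (e : S) (X : Type) (f : X -> S)
  : seq (X + X) -> Prop :=
  loop_language op f e.

(* L is a loop problem of S w.r.t. some finite choice of generators X:
   a semigroup choice, or (when S is a monoid with identity e, i.e. oe = Some e)
   a monoid choice. *)
Definition is_loop_problem (S : Type) (op : S -> S -> S) (oe : option S)
  (X : finType) (L : seq (X + X) -> Prop) : Prop :=
  (exists f : X -> S, sg_generates op f /\ forall w, L w <-> loop_problem_sg op f w)
  \/ (exists e : S, oe = Some e /\
        exists f : X -> S, mon_generates op e f /\
          forall w, L w <-> loop_problem_mon op e f w).

Record transducer (A B : eqType) := Transducer {
  tn : nat;
  tinit : 'I_tn;
  tfinal : pred 'I_tn;
  tedges : seq ('I_tn * seq A * seq B * 'I_tn)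
}.

Inductive tpath (A B : eqType) (T : transducer A B) : 'I_(tn T) -> seq A -> seq B -> Prop :=
  | tpath_end (q : 'I_(tn T)) : @tfinal _ _ T q -> tpath q [::] [::]
  | tpath_step (q : 'I_(tn T)) u v (q' : 'I_(tn T)) u' v' :
      (q, u, v, q') \in tedges T -> tpath q' u' v' -> tpath q (u ++ u') (v ++ v').
Arguments tpath {A B} T _ _ _.

Definition taccepts (A B : eqType) (T : transducer A B) (u : seq A) (v : seq B) : Prop :=
  tpath T (tinit T) u v.

Definition rat_image (A B : eqType) (L1 : seq A -> Prop) (L2 : seq B -> Prop) : Prop :=
  exists T : transducer A B, forall v, L2 v <-> exists u, L1 u /\ taccepts T u v.

Definition rat_equiv (A B : eqType) (L1 : seq A -> Prop) (L2 : seq B -> Prop) : Prop :=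
  rat_image L1 L2 /\ rat_image L2 L1.

From mathcomp Require Import all_boot.
From Stdlib Require Import IndefiniteDescription.
Set Implicit Arguments. Unset Strict Implicit. Unset Printing Implicit Defensive.

(* If every generator of one choice is represented by a word [W y] over the
   other, substituting [y -> W y] and [y-bar -> reverse of the barred W y]
   maps the paths of one loop automaton onto the paths of the other with the
   same endpoints, so one loop problem is the inverse image of the other under
   a monoid morphism: a rational transduction.  Mixing a semigroup choice with
   a monoid choice needs two corrections that a three-state transducer still
   handles: a loop of S at e is a loop of S^1 at 1 conjugated by a word [z]
   for e, and a nonempty loop of S^1 at 1 is a loop of S at e that leaves 1 by
   a positive letter and returns by a negative one. *)

Definition word_act (M X : Type) (mul : M -> M -> M) (g : X -> M) (m : M) (w : seq X)
  : M :=
  foldl (fun a x => mul a (g x)) m w.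

Definition rmul_word (M X : Type) (mul : M -> M -> M) (g : X -> M) (s : M) (w : seq X)
  : Prop :=
  forall m, mul m s = word_act mul g m w.

Definition subst_word (A B : Type) (phi : B -> seq A) (v : seq B) : seq A :=
  flatten (map phi v).

Lemma subst_word_cons (A B : Type) (phi : B -> seq A) b v :
  subst_word phi (b :: v) = phi b ++ subst_word phi v.
Proof. by []. Qed.

Definition hat_subst (X1 X2 : Type) (W : X2 -> seq X1) (a : X2 + X2) : seq (X1 + X1) :=
  match a with inl y => map inl (W y) | inr y => rev (map inr (W y)) end.

Section LoopAutomaton.
Variables (M : Type) (mul : M -> M -> M).

Lemma lpath_cat X (g : X -> M) u v m m' :
  lpath mul g m (u ++ v) m' <-> exists m1, lpath mul g m u m1 /\ lpath mul g m1 v m'.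
Proof.
elim: u m => [|[x|x] u IHu] m /=.
- by split=> [|[m1 [-> //]]]; exists m.
- exact: IHu.
- split=> [[m0 [Em0 /IHu [m1 [p1 p2]]]]|[m1 [[m0 [Em0 p1]] p2]]].
    by exists m1; split=> //; exists m0.
  by exists m0; split=> //; apply/IHu; exists m1.
Qed.

Lemma lpath_inl X (g : X -> M) w m m' :
  lpath mul g m (map inl w) m' <-> m' = word_act mul g m w.
Proof. by elim: w m => [|x w IHw] m /=; [split=> ->|exact: IHw]. Qed.

Lemma lpath_rev_inr X (g : X -> M) w m m' :
  lpath mul g m (rev (map inr w)) m' <-> m = word_act mul g m' w.
Proof.
elim/last_ind: w m => [|w x IHw] m; first by split=> ->.
rewrite map_rcons rev_rcons /word_act foldl_rcons /=.
split=> [[m0 [<- /IHw ->]] //|->].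
by exists (word_act mul g m' w); split=> //; apply/IHw.
Qed.

Lemma lpath_subst X1 X2 (g1 : X1 -> M) (g2 : X2 -> M) (W : X2 -> seq X1) :
  (forall y, rmul_word mul g1 (g2 y) (W y)) ->
  forall v m m', lpath mul g2 m v m' <-> lpath mul g1 m (subst_word (hat_subst W) v) m'.
Proof.
move=> HW; elim=> [//|[y|y] v IHv] m m'; rewrite /= subst_word_cons lpath_cat.
- split=> [p|[m1 [/lpath_inl -> p]]]; last by rewrite HW; apply/IHv.
  by exists (mul m (g2 y)); split; [apply/lpath_inl; rewrite HW|apply/IHv].
- split=> [[m0 [<- p]]|[m1 [/lpath_rev_inr -> p]]].
    by exists m0; split; [apply/lpath_rev_inr; rewrite HW|apply/IHv].
  by exists m1; split; [rewrite HW|apply/IHv].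
Qed.

Lemma lpath_transfer X1 X2 (g1 : X1 -> M) (g2 : X2 -> M) :
  (forall y, exists w, rmul_word mul g1 (g2 y) w) ->
  exists phi : X2 + X2 -> seq (X1 + X1),
    forall v m m', lpath mul g2 m v m' <-> lpath mul g1 m (subst_word phi v) m'.
Proof.
move=> /functional_choice [W HW].
by exists (hat_subst W); apply: lpath_subst.
Qed.

End LoopAutomaton.

Lemma rat_image_ext (A B : eqType) (L1 L1' : seq A -> Prop) (L2 L2' : seq B -> Prop) :
  (forall u, L1 u <-> L1' u) -> (forall v, L2 v <-> L2' v) ->
  rat_image L1' L2' -> rat_image L1 L2.
Proof.
move=> E1 E2 [T HT]; exists T => v; rewrite E2 HT.
by split=> -[u [/E1 ? ?]]; exists u; split=> //; apply/E1.
Qed.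

Definition st0 : 'I_3 := Ordinal (isT : 0 < 3).
Definition st1 : 'I_3 := Ordinal (isT : 1 < 3).
Definition st2 : 'I_3 := Ordinal (isT : 2 < 3).

Section AffixTransducer.
Variables (A : eqType) (B : finType) (pre post : seq A) (phi : B -> seq A).

Definition affix_transducer : transducer A B :=
  Transducer st0 (pred1 st2)
    ((st0, pre, [::], st1) :: (st1, post, [::], st2)
       :: [seq (st1, phi b, [:: b], st1) | b <- enum B]).

Let T := affix_transducer.

Lemma tpath_affix_inv q u v : tpath T q u v ->
  match val q with
  | 0 => u = pre ++ subst_word phi v ++ post
  | 1 => u = subst_word phi v ++ post
  | _ => u = [::] /\ v = [::]
  end.
Proof.
elim=> [_ /eqP -> //|q0 u0 v0 q1 u1 v1 + _].
rewrite !inE => /or3P[/eqP[-> -> -> ->] -> //|/eqP[-> -> -> ->] [-> ->]|].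
- by rewrite cats0.
- by case/mapP=> b _ [-> -> -> ->] ->; rewrite catA.
Qed.

Lemma tpath_affix_st1 v : tpath T st1 (subst_word phi v ++ post) v.
Proof.
elim: v => [|b v IHv].
- have e : (st1, post, [::], st2) \in tedges T by rewrite !inE eqxx orbT.
  by have := tpath_step e (tpath_end (T := T) (eqxx st2)); rewrite !cats0.
- rewrite subst_word_cons -catA -cat1s.
  apply: tpath_step IHv.
  by rewrite !inE; apply/or3P/Or33/mapP; exists b; rewrite ?mem_enum.
Qed.

Lemma affix_transducerP u v : taccepts T u v <-> u = pre ++ subst_word phi v ++ post.
Proof.
split=> [/tpath_affix_inv //|->].
by rewrite -[v]cat0s; apply: tpath_step (tpath_affix_st1 v); rewrite inE eqxx.
Qed.

End AffixTransducer.

Lemma rat_image_affix_preimage (A : eqType) (B : finType) (pre post : seq A)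
    (phi : B -> seq A) (L : seq A -> Prop) :
  rat_image L (fun v => L (pre ++ subst_word phi v ++ post)).
Proof.
exists (affix_transducer pre post phi) => v.
split=> [Lv|[u [Lu /affix_transducerP <-]]] //.
by exists (pre ++ subst_word phi v ++ post); split; last exact/affix_transducerP.
Qed.

Definition bracketed (B : Type) (P Q : pred B) (v : seq B) : Prop :=
  v = [::] \/ exists a v1 b, [/\ P a, Q b & v = a :: rcons v1 b].

Section BracketTransducer.
Variables (A : eqType) (B : finType) (P Q : pred B) (phi : B -> seq A).

Definition bracket_transducer : transducer A B :=
  Transducer st0 (mem [:: st0; st2])
    ([seq (st0, phi a, [:: a], st1) | a <- enum P]
       ++ [seq (st1, phi b, [:: b], st1) | b <- enum B]
       ++ [seq (st1, phi b, [:: b], st2) | b <- enum Q]).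

Let T := bracket_transducer.

Lemma tpath_bracket_inv q u v : tpath T q u v ->
  u = subst_word phi v /\
  match val q with
  | 0 => bracketed P Q v
  | 1 => exists v1 b, Q b /\ v = rcons v1 b
  | _ => v = [::]
  end.
Proof.
elim=> [q0|q0 u0 v0 q1 u1 v1 + _ [-> IH]].
  by rewrite /= !inE => /orP[] /eqP ->; split=> //; left.
rewrite !mem_cat => /or3P[] /mapP[b + [-> -> -> Eq1]]; rewrite Eq1 /= in IH;
  rewrite ?mem_enum => Hb; split=> //.
- by case: IH => v2 [b' [Qb' ->]]; right; exists b, v2, b'.
- by case: IH => v2 [b' [Qb' ->]]; exists (b :: v2), b'.
- by rewrite IH; exists [::], b.
Qed.

Lemma tpath_bracket_st1 v1 b : Q b ->
  tpath T st1 (subst_word phi (rcons v1 b)) (rcons v1 b).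
Proof.
move=> Qb; elim: v1 => [|c v1 IHv1] /=.
- have e : (st1, phi b, [:: b], st2) \in tedges T.
    by rewrite !mem_cat; apply/or3P/Or33/mapP; exists b; rewrite ?mem_enum.
  exact: tpath_step e (tpath_end (T := T) (isT : st2 \in [:: st0; st2])).
- rewrite subst_word_cons -cat1s.
  apply: tpath_step IHv1.
  by rewrite !mem_cat; apply/or3P/Or32/mapP; exists c; rewrite ?mem_enum.
Qed.

Lemma bracket_transducerP u v :
  taccepts T u v <-> bracketed P Q v /\ u = subst_word phi v.
Proof.
split=> [/tpath_bracket_inv [] //|[[->|[a [v1 [b [Pa Qb ->]]]]] ->]].
  exact: (tpath_end (T := T) (isT : st0 \in [:: st0; st2])).
rewrite subst_word_cons -cat1s.
apply: tpath_step (tpath_bracket_st1 v1 Qb).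
by rewrite !mem_cat; apply/or3P/Or31/mapP; exists a; rewrite ?mem_enum.
Qed.

End BracketTransducer.

Lemma rat_image_bracketed_preimage (A : eqType) (B : finType) (P Q : pred B)
    (phi : B -> seq A) (L : seq A -> Prop) :
  rat_image L (fun v => bracketed P Q v /\ L (subst_word phi v)).
Proof.
exists (bracket_transducer P Q phi) => v.
split=> [[Bv Lv]|[u [Lu /bracket_transducerP [Bv Eu]]]]; last by rewrite -Eu.
by exists (subst_word phi v); split; last exact/bracket_transducerP.
Qed.

Lemma rat_image_loop_language (M : Type) (mul : M -> M -> M) (one : M)
    (X1 X2 : finType) (g1 : X1 -> M) (g2 : X2 -> M) :
  (forall y, exists w, rmul_word mul g1 (g2 y) w) ->
  rat_image (loop_language mul g1 one) (loop_language mul g2 one).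
Proof.
move=> /lpath_transfer [phi Hphi].
apply: rat_image_ext
  (rat_image_affix_preimage [::] [::] phi (loop_language mul g1 one)) => // v.
by rewrite cats0; apply: Hphi.
Qed.

Definition is_inl {A B : Type} (a : A + B) : bool := if a is inl _ then true else false.
Definition is_inr {A B : Type} (a : A + B) : bool := if a is inr _ then true else false.

Section Semigroup.
Variables (S : Type) (op : S -> S -> S).
Hypothesis op_assoc : forall a b c, op a (op b c) = op (op a b) c.

Local Notation S1 := (adj1_mul op).

Lemma word_act_op X (f : X -> S) m a w :
  op m (word_act op f a w) = word_act op f (op m a) w.
Proof. by elim: w a => [|x w IHw] a //=; rewrite IHw op_assoc. Qed.

Lemma word_act_Some X (f : X -> S) a w :
  word_act S1 (fun x => Some (f x)) (Some a) w = Some (word_act op f a w).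
Proof. by elim: w a => [|x w IHw] a //=; apply: IHw. Qed.

Lemma sg_generates_rmul_word_adj1 X (f : X -> S) : sg_generates op f ->
  forall s, exists w, rmul_word S1 (fun x => Some (f x)) (Some s) w.
Proof.
move=> gen s; have [x [w ->]] := gen s.
by exists (x :: w) => -[a|] /=; rewrite word_act_Some // word_act_op.
Qed.

Lemma sg_generates_rmul_word X (f : X -> S) : sg_generates op f ->
  forall s, exists w, rmul_word op f s w.
Proof.
move=> /sg_generates_rmul_word_adj1 gen s; have [w Hw] := gen s.
by exists w => m; have := Hw (Some m); rewrite /= word_act_Some => -[].
Qed.

Lemma lpath_adj1_Some X (f : X -> S) w m m' :
  lpath op f m w m' -> lpath S1 (fun x => Some (f x)) (Some m) w (Some m').
Proof.
elim: w m => [|[x|x] w IHw] m /=; first by move->.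
  exact: IHw.
by case=> m0 [<- p]; exists (Some m0); split; last exact: IHw.
Qed.

Lemma lpath_adj1_odflt X (f : X -> S) e : (forall x, op e (f x) = f x) ->
  forall w a b, lpath S1 (fun x => Some (f x)) a w b -> lpath op f (odflt e a) w (odflt e b).
Proof.
move=> mul1f.
have odflt_mul a x : odflt e (S1 a (Some (f x))) = op (odflt e a) (f x).
  by case: a => [a|] /=; rewrite ?mul1f.
elim=> [|[x|x] w IHw] a b /=; first by move->.
  by move/IHw; rewrite odflt_mul.
by case=> m0 [<- p]; exists (odflt e m0); split; [rewrite odflt_mul|exact: IHw].
Qed.

Variable e : S.
Hypotheses (mul1S : forall a, op e a = a) (mulS1 : forall a, op a e = a).

Lemma mon_generates_rmul_word X (f : X -> S) : mon_generates op e f ->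
  forall s, exists w, rmul_word op f s w.
Proof. by move=> gen s; have [w ->] := gen s; exists w => m; rewrite word_act_op mulS1. Qed.

Lemma loop_problem_mon_conj X (f : X -> S) z :
  word_act S1 (fun x => Some (f x)) None z = Some e ->
  forall u, loop_problem_mon op e f u <->
    loop_problem_sg op f (map inl z ++ u ++ rev (map inr z)).
Proof.
move=> ze u; split=> [p|].
  apply/lpath_cat; exists (Some e); split; first exact/lpath_inl.
  by apply/lpath_cat; exists (Some e); split; [exact: lpath_adj1_Some|exact/lpath_rev_inr].
case/lpath_cat=> _ [/lpath_inl -> /lpath_cat [m [p /lpath_rev_inr]]].
rewrite ze in p * => me; rewrite me in p.
exact: (lpath_adj1_odflt (fun x => mul1S (f x)) p).
Qed.

Lemma loop_problem_sgE X (f : X -> S) v :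
  loop_problem_sg op f v <-> bracketed is_inl is_inr v /\ loop_problem_mon op e f v.
Proof.
have S1_neq_None m x : S1 m (Some (f x)) <> None by case: m.
split=> [p|[[->|[a [v1 [b [+ + ->]]]]] p] //].
  split; last exact: (lpath_adj1_odflt (fun x => mul1S (f x)) p).
  case/lastP: v p => [|w b] p; first by left.
  have [m [_ pb]] : exists m, lpath S1 (fun x => Some (f x)) None w m /\
      lpath S1 (fun x => Some (f x)) m [:: b] None by apply/lpath_cat; rewrite cats1.
  case: b pb p => [y /S1_neq_None //|y _].
  case: w => [|[x|x] v1] p; first by case: p => m0 [/S1_neq_None].
    by right; exists (inl x), v1, (inr y).
  by case: p => m0 [/S1_neq_None].
case: a p => [x|//] p; case: b p => [//|y] p _ _.
rewrite /loop_problem_mon /loop_language /= mul1S -cats1 in p.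
case/lpath_cat: p => m [p [m0 [Em m0e]]].
rewrite -Em m0e mul1S in p; rewrite /loop_problem_sg /loop_language /= -cats1.
by apply/lpath_cat; exists (Some (f y)); split; [exact: lpath_adj1_Some|exists None].
Qed.

Lemma rat_image_sg_mon (X1 X2 : finType) (f1 : X1 -> S) (f2 : X2 -> S) :
  sg_generates op f1 -> rat_image (loop_problem_sg op f1) (loop_problem_mon op e f2).
Proof.
move=> gen; have [z ze] := sg_generates_rmul_word_adj1 gen e.
have [phi Hphi] := lpath_transfer (fun y => sg_generates_rmul_word gen (f2 y)).
apply: rat_image_ext (rat_image_affix_preimage (map inl z) (rev (map inr z)) phi
  (loop_problem_sg op f1)) => // v.
by rewrite -(loop_problem_mon_conj (esym (ze None))); apply: Hphi.
Qed.

Lemma rat_image_mon_sg (X1 X2 : finType) (f1 : X1 -> S) (f2 : X2 -> S) :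
  mon_generates op e f1 -> rat_image (loop_problem_mon op e f1) (loop_problem_sg op f2).
Proof.
move=> gen; have [phi Hphi] := lpath_transfer (fun y => mon_generates_rmul_word gen (f2 y)).
apply: rat_image_ext (rat_image_bracketed_preimage is_inl is_inr phi
  (loop_problem_mon op e f1)) => // v.
by rewrite loop_problem_sgE; apply: and_iff_compat_l; apply: Hphi.
Qed.

End Semigroup.

Lemma is_loop_problem_rat_image (S : Type) (op : S -> S -> S)
    (op_assoc : forall a b c, op a (op b c) = op (op a b) c) (oe : option S)
    (oe_id : forall e, oe = Some e -> forall a, op e a = a /\ op a e = a)
    (X1 X2 : finType) (L1 : seq (X1 + X1) -> Prop) (L2 : seq (X2 + X2) -> Prop) :
  is_loop_problem op oe L1 -> is_loop_problem op oe L2 -> rat_image L1 L2.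
Proof.
have mul1S e : oe = Some e -> forall a, op e a = a by move=> /oe_id id_e a; case: (id_e a).
have mulS1 e : oe = Some e -> forall a, op a e = a by move=> /oe_id id_e a; case: (id_e a).
case=> [[f1 [gen1 E1]]|[e [oe_e [f1 [gen1 E1]]]]] [[f2 [_ E2]]|[e' [oe_e' [f2 [_ E2]]]]];
  apply: rat_image_ext E1 E2 _.
- apply: rat_image_loop_language => y.
  exact: (sg_generates_rmul_word_adj1 op_assoc gen1 (f2 y)).
- exact: (rat_image_sg_mon op_assoc (mul1S _ oe_e') f2 gen1).
- exact: (rat_image_mon_sg op_assoc (mul1S _ oe_e) (mulS1 _ oe_e) f2 gen1).
- have e'e : e' = e by move: oe_e'; rewrite oe_e => -[].
  subst e'; apply: rat_image_loop_language => y.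
  exact: (mon_generates_rmul_word op_assoc (mulS1 _ oe_e) gen1 (f2 y)).
Qed.

Theorem corollary4p8 (S : Type) (op : S -> S -> S)
  (op_assoc : forall a b c, op a (op b c) = op (op a b) c)
  (oe : option S)
  (oe_id : forall e, oe = Some e -> forall a, op e a = a /\ op a e = a)
  (X1 X2 : finType) (L1 : seq (X1 + X1) -> Prop) (L2 : seq (X2 + X2) -> Prop) :
  is_loop_problem op oe L1 -> is_loop_problem op oe L2 -> rat_equiv L1 L2.
Proof. by move=> P1 P2; split; apply: (is_loop_problem_rat_image op_assoc oe_id). Qed.
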